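(* Let $G$ be a finite group with identity $e$ and let $S\subseteq G\setminus\{e\}$ with $|S|=k\le 4$, such that some ordering of the elements of $S$ has product different from $e$. Suppose $S$ is not of either of the following forms: (i) $|S|=4$ and $S=\{x,x^{-1},y,z\}$ for elements with $xyz=x^{-1}zy=e$; (ii) $|S|=4$ and $S=\{w,x,y,z\}$ for elements with $wxy=wyz=wzx=xzy=e$. Then there is an ordering of the elements of $S$ whose partial products are pairwise distinct, i.e. $G$ has an $S$-sequencing.
   Context: For a group $G$ with identity $e$ and a set $S\subseteq G\setminus\{e\}$ with $|S|=k$, an $S$-sequencing of $G$ is an ordering $(g_1,\dots,g_k)$ of the elements of $S$ (each used exactly once) such that the partial products $h_0=e$, $h_i=g_1g_2\cdots g_i$ ($1\le i\le k$) are pairwise distinct. *)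

From mathcomp Require Import all_boot all_fingroup.
Set Implicit Arguments. Unset Strict Implicit. Unset Printing Implicit Defensive.
Import GroupScope.
Open Scope group_scope.

Definition ordering_of (gT : finGroupType) (S : {set gT}) (s : seq gT) : bool :=
  perm_eq s (enum S).

Definition partial_prods (gT : finGroupType) (s : seq gT) : seq gT :=
  [seq \prod_(g <- take i s) g | i <- iota 0 (size s).+1].

Definition is_sequencing (gT : finGroupType) (S : {set gT}) (s : seq gT) : bool :=
  ordering_of S s && uniq (partial_prods s).

Definition form_i (gT : finGroupType) (S : {set gT}) : Prop :=
  #|S| = 4 /\ exists x y z : gT,
    S = [set x; x^-1; y; z] /\ x * y * z = 1 /\ x^-1 * z * y = 1.

Definition form_ii (gT : finGroupType) (S : {set gT}) : Prop :=
  #|S| = 4 /\ exists w x y z : gT,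
    S = [set w; x; y; z] /\ w * x * y = 1 /\ w * y * z = 1 /\
    w * z * x = 1 /\ x * z * y = 1.

From mathcomp Require Import all_boot all_fingroup.
Set Implicit Arguments. Unset Strict Implicit. Unset Printing Implicit Defensive.
Import GroupScope.
Open Scope group_scope.

(* The partial products of an ordering are pairwise distinct exactly when no
   block of consecutive terms multiplies to 1, so for k <= 4 it suffices to
   exhibit an ordering all of whose blocks are nontrivial.  For k <= 3 one only
   has to keep an inverse pair apart.  For k = 4, if S = {x, x^-1, y, z} with
   yz <> 1, one of x y z x^-1, x z y x^-1, y x z x^-1, y x^-1 z x works unless
   {yz, zy} = {x, x^-1}, which is form (i); if S = {x, x^-1, y, y^-1}, the
   ordering x^-1 y^-1 x y works unless x and y commute, and then every ordering
   multiplies to 1.  If S has no inverse pair, a given ordering a b c d with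
   abcd <> 1 works unless a 3-block, say abc, is trivial; then b c d a, c a d b
   or a b d c works unless cda = adb = bdc = 1, which is form (ii). *)

Lemma cards4_split (T : finType) (A : {set T}) u v :
  #|A| = 4 -> u \in A -> v \in A -> u != v ->
  exists y z, uniq [:: u; v; y; z] /\ A =i [:: u; v; y; z].
Proof.
move=> A4 uA vA uv; have uvA : [set u; v] \subset A by rewrite subUset !sub1set uA vA.
have /cards2P[y [z [yz Ayz]]] : #|A :\: [set u; v]| == 2.
  by rewrite cardsDS // A4 cards2 uv.
have [y_uv z_uv] : y \in A :\: [set u; v] /\ z \in A :\: [set u; v].
  by rewrite Ayz !inE !eqxx orbT.
exists y, z; split.
  move: y_uv z_uv; rewrite !inE !negb_or => /andP[/andP[yu yv] _] /andP[/andP[zu zv] _].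
  by rewrite /= !inE !negb_or uv yz !(eq_sym _ y) !(eq_sym _ z) yu yv zu zv.
by move=> w; rewrite -(setID A [set u; v]) (setIidPr uvA) Ayz !inE -!orbA.
Qed.

Section Sequencings.
Variable gT : finGroupType.
Implicit Types (A : {set gT}) (s : seq gT) (a b c d u v x y z : gT).

Lemma mulg_eq1C u v : (u * v == 1) = (v * u == 1).
Proof. by rewrite !mulg_eq1 -(inj_eq invg_inj) invgK eq_sym. Qed.

Lemma conjg_mul_eq1 u v : (u * v * u^-1 == 1) = (v == 1).
Proof. by rewrite -mulgA -{1}[u]invgK -conjgE conjg_eq1. Qed.

Lemma mulg3_eq1_rot a b c : a * b * c = 1 -> b * c * a = 1.
Proof. by move/eqP; rewrite -mulgA mulg_eq1C => /eqP. Qed.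

Lemma perm_prod_abelian (G : {group gT}) s1 s2 :
  abelian G -> {subset s1 <= G} -> perm_eq s1 s2 ->
  \prod_(u <- s1) u = \prod_(u <- s2) u.
Proof.
move=> /centsP cGG; elim: s1 s2 => [|x s1 IH] s2 s1G eq12.
  by rewrite perm_sym in eq12; rewrite (perm_small_eq _ eq12).
have s2x : x \in s2 by rewrite -(perm_mem eq12) mem_head.
case/splitPr: s2x eq12 => s2a s2b eq12.
have eq1ab : perm_eq s1 (s2a ++ s2b).
  by rewrite -(perm_cons x) (permPl eq12) -cat1s perm_catCA.
have s2aG : {subset s2a <= G}.
  by move=> u u_s2a; apply: s1G; rewrite (perm_mem eq12) mem_cat u_s2a.
have cx_s2a : commute x (\prod_(u <- s2a) u).
  by apply: cGG; [apply: s1G; rewrite mem_head | rewrite big_seq group_prod].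
rewrite big_cat big_cons (IH (s2a ++ s2b)) // => [|u u_s1]; last first.
  by apply: s1G; rewrite inE u_s1 orbT.
by rewrite big_cat /= big_cons !mulgA cx_s2a.
Qed.

Lemma partial_prods_nil : partial_prods [::] = [:: 1 : gT].
Proof. by rewrite /partial_prods /= big_nil. Qed.

Lemma partial_prods_cons x s :
  partial_prods (x :: s) = 1 :: map (mulg x) (partial_prods s).
Proof.
rewrite /partial_prods -map_comp -[iota 0 _]/(0 :: iota 1 (size s).+1).
rewrite (iotaDl 1 0) map_cons -map_comp take0 big_nil; congr (_ :: _).
by apply: eq_map => i; rewrite /= big_cons.
Qed.

Lemma uniq_partial_prods_cons x s :
  uniq (partial_prods (x :: s)) =
    (x^-1 \notin partial_prods s) && uniq (partial_prods s).
Proof.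
rewrite partial_prods_cons cons_uniq (map_inj_uniq (mulgI x)); congr (~~ _ && _).
apply/mapP/idP => [[u pu /eqP]|pxV]; last by exists x^-1; rewrite ?mulgV.
by rewrite eq_sym -eq_invg_mul => /eqP ->.
Qed.

Lemma uniq_partial_prods3 a b c :
  a != 1 -> b != 1 -> c != 1 -> a * b != 1 -> b * c != 1 -> a * b * c != 1 ->
  uniq (partial_prods [:: a; b; c]).
Proof.
move=> a1 b1 c1 ab1 bc1 abc1.
rewrite !uniq_partial_prods_cons !partial_prods_cons partial_prods_nil /=.
by rewrite !inE !eq_invg_mul !mulg1 !mulgA !negb_or a1 b1 c1 ab1 bc1 abc1.
Qed.

Lemma uniq_partial_prods4 a b c d :
  a != 1 -> b != 1 -> c != 1 -> d != 1 ->
  a * b != 1 -> b * c != 1 -> c * d != 1 -> a * b * c != 1 -> b * c * d != 1 ->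
  a * b * c * d != 1 -> uniq (partial_prods [:: a; b; c; d]).
Proof.
move=> a1 b1 c1 d1 ab1 bc1 cd1 abc1 bcd1 abcd1.
rewrite !uniq_partial_prods_cons !partial_prods_cons partial_prods_nil /=.
by rewrite !inE !eq_invg_mul !mulg1 !mulgA !negb_or a1 b1 c1 d1 ab1 bc1 cd1 abc1 bcd1 abcd1.
Qed.

Lemma uniq_partial_prods_conj3 x y :
  x != 1 -> y != 1 -> y != x -> y != x^-1 -> uniq (partial_prods [:: x; y; x^-1]).
Proof.
move=> x1 y1 yx yxV; apply: uniq_partial_prods3; rewrite ?invg_eq1 ?conjg_mul_eq1 //.
  by rewrite mulg_eq1C mulg_eq1.
by rewrite mulg_eq1 invgK.
Qed.

Lemma uniq_partial_prods_conj4 x y z :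
  x != 1 -> y != 1 -> z != 1 -> y != x^-1 -> z != x -> y * z \notin [:: 1; x; x^-1] ->
  uniq (partial_prods [:: x; y; z; x^-1]).
Proof.
rewrite !inE !negb_or => x1 y1 z1 yxV zx /and3P[yz1 yzx yzxV].
apply: uniq_partial_prods4; rewrite ?invg_eq1 -?(mulgA x y z) ?conjg_mul_eq1 //.
- by rewrite mulg_eq1C mulg_eq1.
- by rewrite mulg_eq1 invgK.
- by rewrite mulg_eq1C mulg_eq1.
- by rewrite mulg_eq1 invgK.
Qed.

Lemma uniq_partial_prods_central x y z :
  y != 1 -> z != 1 -> x != x^-1 -> y != x^-1 -> z != x -> z != x^-1 ->
  y * z = x -> z * y = x -> uniq (partial_prods [:: y; x; z; x^-1]).
Proof.
move=> y1 z1 xxV yxV zx zxV yz zy.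
have x1 : x != 1 by apply: contra_neq xxV => ->; rewrite invg1.
have yxz : y * x * z = x * x by rewrite -{1}zy mulgA -(mulgA (y * z)) yz.
apply: uniq_partial_prods4; rewrite ?invg_eq1 ?conjg_mul_eq1 ?yxz //.
- by rewrite mulg_eq1.
- by rewrite mulg_eq1C mulg_eq1.
- by rewrite mulg_eq1 invgK.
- by rewrite mulg_eq1.
- by rewrite mulgK.
Qed.

Lemma uniq_partial_prods_commutator x y :
  x != 1 -> y != 1 -> x != y -> x^-1 != y -> [~ x, y] != 1 ->
  uniq (partial_prods [:: x^-1; y^-1; x; y]).
Proof.
move=> x1 y1 xy xVy xy1.
apply: uniq_partial_prods4; rewrite ?invg_eq1 //.
- by rewrite mulg_eq1 invgK.
- by rewrite mulg_eq1 (inj_eq invg_inj) eq_sym.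
- by rewrite mulg_eq1C mulg_eq1 eq_sym.
- by rewrite -mulgA -conjgE conjg_eq1 invg_eq1.
- by rewrite -mulgA -conjgE conjg_eq1.
- by rewrite commgEl conjgE !mulgA in xy1.
Qed.

Lemma uniq_partial_prods_triple a b c d :
  a != 1 -> b != 1 -> c != 1 -> d != 1 -> d != a -> c * d != 1 -> d * a != 1 ->
  a * b * c = 1 -> c * d * a != 1 -> uniq (partial_prods [:: b; c; d; a]).
Proof.
move=> a1 b1 c1 d1 da cd1 da1 abc cda1.
have bc : b * c = a^-1 by apply/eqP; rewrite eq_sym eq_invg_mul mulgA abc.
apply: uniq_partial_prods4; rewrite ?bc ?invg_eq1 //.
  by rewrite mulg_eq1 (inj_eq invg_inj) eq_sym.
by rewrite -mulgA -conjgE conjg_eq1.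
Qed.

Definition sequenceable A := exists s, is_sequencing A s.

Lemma sequenceable_reorder A s s' :
  uniq s -> A =i s -> s' =i s -> size s' = size s -> uniq (partial_prods s') ->
  sequenceable A.
Proof.
move=> s_uniq As s's s'_size pp_uniq; exists s'; apply/andP; split=> //.
have s'_uniq : uniq s' by rewrite (uniq_size_uniq s_uniq) ?s'_size // => u; rewrite s's.
by apply: uniq_perm s'_uniq (enum_uniq _) _ => u; rewrite mem_enum As s's.
Qed.

Lemma sequenceable_of A s :
  uniq s -> A =i s -> uniq (partial_prods s) -> sequenceable A.
Proof. by move=> s_uniq As; apply: sequenceable_reorder s_uniq As _ _. Qed.

Lemma sequenceable3 A a b c :
  1 \notin A -> uniq [:: a; b; c] -> A =i [:: a; b; c] -> a * b * c != 1 ->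
  sequenceable A.
Proof.
move=> A1 l_uniq Al abc1.
have [a1 b1 c1] : [/\ a != 1, b != 1 & c != 1].
  by split; apply: contraNneq A1 => <-; rewrite Al !inE eqxx ?orbT.
move: (l_uniq); rewrite /= !inE !negb_or => /andP[/andP[ab ac] /andP[bc _]].
have reorder s : s =i [:: a; b; c] -> size s = 3 -> uniq (partial_prods s) ->
    sequenceable A.
  exact: sequenceable_reorder l_uniq Al.
have [/eqP ab1 | ab1] := eqVneq (a * b) 1.
  rewrite -eq_invg_mul in ab1; move/eqP: ab1 => bE; subst b.
  apply: (reorder [:: a; c; a^-1]) => //; first by move=> u; rewrite !inE; do ![case: eqP].
  by apply: uniq_partial_prods_conj3; rewrite // eq_sym.
have [/eqP bc1 | bc1] := eqVneq (b * c) 1.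
  rewrite -eq_invg_mul in bc1; move/eqP: bc1 => cE; subst c.
  apply: (reorder [:: b; a; b^-1]) => //; first by move=> u; rewrite !inE; do ![case: eqP].
  by apply: uniq_partial_prods_conj3; rewrite // eq_sym.
by apply: (reorder [:: a; b; c]) => //; apply: uniq_partial_prods3.
Qed.

Lemma sequenceable_small A s :
  1 \notin A -> uniq s -> A =i s -> size s <= 3 -> \prod_(u <- s) u != 1 ->
  sequenceable A.
Proof.
move=> A1 s_uniq As; case: s => [|a [|b [|c [|]]]] // in s_uniq As * => _.
- by rewrite big_nil => /eqP.
- rewrite big_seq1 => a1; apply: sequenceable_of s_uniq As _.
  by rewrite uniq_partial_prods_cons partial_prods_nil /= inE invg_eq1 a1.
- have [a1 b1] : a != 1 /\ b != 1.
    by split; apply: contraNneq A1 => <-; rewrite As !inE eqxx ?orbT.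
  rewrite big_cons big_seq1 => ab1; apply: sequenceable_of s_uniq As _.
  rewrite !uniq_partial_prods_cons !partial_prods_cons partial_prods_nil /=.
  by rewrite !inE !eq_invg_mul !mulg1 !negb_or a1 b1 ab1.
- by rewrite !big_cons big_nil mulg1 mulgA; apply: sequenceable3.
Qed.

Lemma sequenceable_inverse_pair A x y z :
  1 \notin A -> uniq [:: x; x^-1; y; z] -> A =i [:: x; x^-1; y; z] ->
  y * z != 1 -> ~ form_i A -> sequenceable A.
Proof.
move=> A1 l_uniq Al yz1 not_i.
have [x1 y1 z1] : [/\ x != 1, y != 1 & z != 1].
  by split; apply: contraNneq A1 => <-; rewrite Al !inE eqxx ?orbT.
move: (l_uniq); rewrite /= !inE !negb_or.
move=> /and4P[/and3P[xxV xy xz] /andP[xVy xVz] _ _].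
have reorder s : s =i [:: x; x^-1; y; z] -> size s = 4 -> uniq (partial_prods s) ->
    sequenceable A.
  exact: sequenceable_reorder l_uniq Al.
have A_eq x' : x' \in [:: x; x^-1] -> A = [set x'; x'^-1; y; z].
  by rewrite !inE => /orP[]/eqP-> ; apply/setP => u; rewrite Al !inE ?invgK; do ![case: eqP].
have [yz_in | yz_out] := boolP (y * z \in [:: x; x^-1]); last first.
  apply: (reorder [:: x; y; z; x^-1]) => //; first by move=> u; rewrite !inE; do ![case: eqP].
  by apply: uniq_partial_prods_conj4; rewrite // 1?eq_sym // in_cons negb_or yz1.
have [zy_in | zy_out] := boolP (z * y \in [:: x; x^-1]); last first.
  apply: (reorder [:: x; z; y; x^-1]) => //; first by move=> u; rewrite !inE; do ![case: eqP].
  by apply: uniq_partial_prods_conj4; rewrite // 1?eq_sym // in_cons negb_or -mulg_eq1C yz1.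
move: (yz_in) (zy_in); rewrite !inE => /orP[]/eqP yzE /orP[]/eqP zyE.
- apply: (reorder [:: y; x; z; x^-1]) => //; first by move=> u; rewrite !inE; do ![case: eqP].
  by apply: uniq_partial_prods_central; rewrite // 1?eq_sym.
- case: not_i; split; first by rewrite (eq_card Al) (card_uniqP l_uniq).
  exists x^-1, y, z; split; first by apply: A_eq; rewrite !inE eqxx orbT.
  by rewrite -!mulgA yzE zyE invgK mulVg mulgV.
- case: not_i; split; first by rewrite (eq_card Al) (card_uniqP l_uniq).
  exists x, y, z; split; first by apply: A_eq; rewrite !inE eqxx.
  by rewrite -!mulgA yzE zyE mulVg mulgV.
- apply: (reorder [:: y; x^-1; z; x^-1^-1]) => //.
    by move=> u; rewrite !inE invgK; do ![case: eqP].
  by apply: uniq_partial_prods_central; rewrite ?invgK // 1?eq_sym.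
Qed.

Lemma sequenceable_two_inverse_pairs A x y s :
  1 \notin A -> uniq [:: x; x^-1; y; y^-1] -> A =i [:: x; x^-1; y; y^-1] ->
  uniq s -> A =i s -> \prod_(u <- s) u != 1 -> sequenceable A.
Proof.
move=> A1 l_uniq Al s_uniq As s_prod.
have [x1 y1] : x != 1 /\ y != 1.
  by split; apply: contraNneq A1 => <-; rewrite Al !inE eqxx ?orbT.
move: (l_uniq); rewrite /= !inE !negb_or => /and4P[/and3P[_ xy _] /andP[xVy _] _ _].
apply: (sequenceable_reorder l_uniq Al (s' := [:: x^-1; y^-1; x; y])) => //.
  by move=> u; rewrite !inE; do ![case: eqP].
apply: uniq_partial_prods_commutator => //.
apply: contra s_prod => /commgP cxy.
have cG : abelian (<[x]> <*> <[y]>).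
  by rewrite abelianY !cycle_abelian cents_cycle // commute_sym.
have sG : {subset s <= <[x]> <*> <[y]>}.
  move=> u; rewrite -As Al !inE => /or4P[]/eqP->;
    by rewrite ?groupV mem_gen // inE cycle_id ?orbT.
rewrite (perm_prod_abelian cG sG (uniq_perm s_uniq l_uniq _)) => [|u]; last first.
  by rewrite -As Al.
by rewrite !big_cons big_nil !(mulg1, mulgV).
Qed.

Definition inverse_pair_free A := {in A, forall u, u^-1 \in A -> u^-1 = u}.

Lemma inverse_pair_freeP A u v :
  inverse_pair_free A -> u \in A -> v \in A -> u != v -> u * v != 1.
Proof.
move=> freeA uA vA uv; apply: contraNneq uv => /eqP; rewrite mulg_eq1 => /eqP uE.
by rewrite uE freeA // -uE.
Qed.

Lemma sequenceable_triple A a b c d :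
  1 \notin A -> uniq [:: a; b; c; d] -> A =i [:: a; b; c; d] ->
  inverse_pair_free A -> a * b * c = 1 -> ~ form_ii A -> sequenceable A.
Proof.
move=> A1 l_uniq Al freeA abc not_ii.
have [aA bA cA dA] : [/\ a \in A, b \in A, c \in A & d \in A].
  by rewrite !Al !inE !eqxx ?orbT.
have [a1 b1 c1 d1] : [/\ a != 1, b != 1, c != 1 & d != 1].
  by split; apply: contraNneq A1 => <-.
move: (l_uniq); rewrite /= !inE !negb_or => /and4P[/and3P[_ _ ad] /andP[_ bd] cd _].
have [da db dc] : [/\ d != a, d != b & d != c] by rewrite !(eq_sym d).
have pair1 := inverse_pair_freeP freeA.
have reorder s : s =i [:: a; b; c; d] -> size s = 4 -> uniq (partial_prods s) ->
    sequenceable A.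
  exact: sequenceable_reorder l_uniq Al.
have bca := mulg3_eq1_rot abc; have cab := mulg3_eq1_rot bca.
have [cda | cda1] := eqVneq (c * d * a) 1; last first.
  apply: (reorder [:: b; c; d; a]) => //; first by move=> u; rewrite !inE; do ![case: eqP].
  exact: uniq_partial_prods_triple a1 b1 c1 d1 da
    (pair1 _ _ cA dA cd) (pair1 _ _ dA aA da) abc cda1.
have [adb | adb1] := eqVneq (a * d * b) 1; last first.
  apply: (reorder [:: c; a; d; b]) => //; first by move=> u; rewrite !inE; do ![case: eqP].
  exact: uniq_partial_prods_triple b1 c1 a1 d1 db
    (pair1 _ _ aA dA ad) (pair1 _ _ dA bA db) bca adb1.
have [bdc | bdc1] := eqVneq (b * d * c) 1; last first.
  apply: (reorder [:: a; b; d; c]) => //; first by move=> u; rewrite !inE; do ![case: eqP].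
  exact: uniq_partial_prods_triple c1 a1 b1 d1 dc
    (pair1 _ _ bA dA bd) (pair1 _ _ dA cA dc) cab bdc1.
case: not_ii; split; first by rewrite (eq_card Al) (card_uniqP l_uniq).
have acd : a * c * d = 1 by do 2!apply: mulg3_eq1_rot.
exists a, b, c, d; split=> //.
by apply/setP => u; rewrite Al !inE; do ![case: eqP].
Qed.

Lemma sequenceable_inverse_pair_free A a b c d :
  1 \notin A -> uniq [:: a; b; c; d] -> A =i [:: a; b; c; d] ->
  inverse_pair_free A -> a * b * c * d != 1 -> ~ form_ii A -> sequenceable A.
Proof.
move=> A1 l_uniq Al freeA abcd1 not_ii.
have [abc | abc1] := eqVneq (a * b * c) 1.
  exact: sequenceable_triple A1 l_uniq Al freeA abc not_ii.
have [bcd | bcd1] := eqVneq (b * c * d) 1.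
  apply: (sequenceable_triple (a := b) (b := c) (c := d) (d := a) A1 _ _ freeA bcd not_ii).
    by rewrite -(rot_uniq 1) in l_uniq.
  by move=> u; rewrite Al !inE; do ![case: eqP].
have [aA bA cA dA] : [/\ a \in A, b \in A, c \in A & d \in A].
  by rewrite !Al !inE !eqxx ?orbT.
move: (l_uniq); rewrite /= !inE !negb_or => /and4P[/and3P[ab _ _] /andP[bc _] cd _].
have pair1 := inverse_pair_freeP freeA.
apply: sequenceable_of l_uniq Al _.
apply: (uniq_partial_prods4 _ _ _ _ (pair1 _ _ aA bA ab) (pair1 _ _ bA cA bc)
  (pair1 _ _ cA dA cd) abc1 bcd1 abcd1); by apply: contraNneq A1 => <-.
Qed.

End Sequencings.

Theorem theorem2p1 (gT : finGroupType) (S : {set gT}) :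
  1 \notin S ->
  (#|S| <= 4)%N ->
  (exists s : seq gT, ordering_of S s /\ \prod_(g <- s) g != 1) ->
  ~ form_i S ->
  ~ form_ii S ->
  exists s : seq gT, is_sequencing S s.
Proof.
move=> S1 S_le4 [s [s_ord s_prod]] not_i not_ii.
have s_uniq : uniq s by rewrite (perm_uniq s_ord) enum_uniq.
have S_s : S =i s by move=> u; rewrite (perm_mem s_ord) mem_enum.
have s_size : size s = #|S| by rewrite cardE (perm_size s_ord).
clear s_ord.
move: S_le4; rewrite leq_eqVlt ltnS => /orP[/eqP S4 | S_le3]; last first.
  by apply: sequenceable_small S1 s_uniq S_s _ s_prod; rewrite s_size.
case: (pickP [pred u in S | (u^-1 \in S) && (u^-1 != u)]) => [x | S_free].
  case/and3P=> xS xVS; rewrite eq_sym => xxV.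
  have [y [z [l_uniq S_l]]] := cards4_split S4 xS xVS xxV.
  have [/eqP yz1 | yz1] := eqVneq (y * z) 1; last first.
    exact: sequenceable_inverse_pair S1 l_uniq S_l yz1 not_i.
  rewrite -eq_invg_mul in yz1; move/eqP: yz1 => zE; subst z.
  exact: sequenceable_two_inverse_pairs S1 l_uniq S_l s_uniq S_s s_prod.
have freeS : inverse_pair_free S.
  by move=> u uS uVS; apply/eqP; move: (S_free u); rewrite /= uS uVS => /negbFE.
rewrite S4 in s_size.
case: s => [|a [|b [|c [|d [|]]]]] // in s_prod s_uniq S_s s_size *.
rewrite !big_cons big_nil mulg1 !mulgA in s_prod.
exact: sequenceable_inverse_pair_free S1 s_uniq S_s freeS s_prod not_ii.
Qed.
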